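(* Let $d\ge2$ and $R>0$, and let $P\subseteq R\mathbb{B}_2^d$ be a simple bounded polytope containing the origin in its interior, with polar $P^\circ=\{y:\langle x,y\rangle\le1\ \forall x\in P\}$. Suppose every facet of $P^\circ$ has Euclidean diameter at most $\gamma>0$. Then for every $c\in\mathbb{S}^{d-1}$, every vertex $v^+$ of $P$ maximizing $c^\top x$ and every vertex $v^-$ of $P$ minimizing $c^\top x$, there is no simplex path from $v^+$ to $v^-$ of length less than $(d-1)\big(\frac{2}{R\gamma}-2\big)$.
   Context: Write $P=\{x: a_j^\top x\le 1,\ j\in[n]\}$ as a minimal inequality description. A simplex path of length $k$ from $v^+$ to $v^-$ is a sequence $B^0,\dots,B^k\in\binom{[n]}{d}$ of feasible bases of $P$ (index sets whose constraints are tight at a vertex of $P$ and linearly independent) with $|B^{i-1}\cap B^i|=d-1$ for all $i$, such that $a_j^\top v^+=1$ for all $j\in B^0$ and $a_j^\top v^-=1$ for all $j\in B^k$. Simple means every vertex lies on exactly $d$ facets. *)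

From mathcomp Require Import all_boot all_order all_algebra.
Set Implicit Arguments. Unset Strict Implicit. Unset Printing Implicit Defensive.
Import Order.TTheory GRing.Theory Num.Theory.
Local Open Scope ring_scope.

Section Polytopes.
Variables (R : rcfType) (d : nat).
Notation vec := 'rV[R]_d.

Definition dotp (x y : vec) : R := \sum_(i < d) x ord0 i * y ord0 i.
Definition enorm (x : vec) : R := Num.sqrt (dotp x x).

Definition inP (n : nat) (a : 'I_n -> vec) (x : vec) : Prop :=
  forall j, dotp (a j) x <= 1.

Definition minimal_desc (n : nat) (a : 'I_n -> vec) : Prop :=
  forall j, exists x : vec, 1 < dotp (a j) x /\ (forall k, k != j -> dotp (a k) x <= 1).

Definition is_vertex (n : nat) (a : 'I_n -> vec) (v : vec) : Prop :=
  inP a v /\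
  forall y z : vec, inP a y -> inP a z ->
    forall t : R, 0 < t -> t < 1 -> v = t *: y + (1 - t) *: z -> y = z.

Definition simple_poly (n : nat) (a : 'I_n -> vec) : Prop :=
  forall v, is_vertex a v -> #|[set j | dotp (a j) v == 1]| = d.

Definition polar (n : nat) (a : 'I_n -> vec) (y : vec) : Prop :=
  forall x, inP a x -> dotp x y <= 1.

(* F is a facet of the convex set K: F is the intersection of K with a supporting
   hyperplane {y : <w,y> = b} (w <> 0) and F has affine dimension d-1, i.e.
   contains d affinely independent points *)
Definition is_facet (K F : vec -> Prop) : Prop :=
  exists (w : vec) (b : R),
    w != 0 /\
    (forall y, K y -> dotp w y <= b) /\
    (forall y, F y <-> (K y /\ dotp w y = b)) /\
    exists p : 'I_d -> vec, (forall i, F (p i)) /\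
      forall lam : 'I_d -> R, \sum_i lam i = 0 -> \sum_i lam i *: p i = 0 ->
        forall i, lam i = 0.

Definition diam_le (F : vec -> Prop) (g : R) : Prop :=
  forall y z, F y -> F z -> enorm (y - z) <= g.

Definition feasible_basis (n : nat) (a : 'I_n -> vec) (B : {set 'I_n}) : Prop :=
  #|B| = d /\
  (exists v, is_vertex a v /\ forall j, j \in B -> dotp (a j) v = 1) /\
  (forall lam : 'I_n -> R, \sum_(j in B) lam j *: a j = 0 -> forall j, j \in B -> lam j = 0).

Definition simplex_path (n : nat) (a : 'I_n -> vec) (vp vm : vec) (k : nat)
    (Bs : nat -> {set 'I_n}) : Prop :=
  (forall i, (i <= k)%N -> feasible_basis a (Bs i)) /\
  (forall i, (1 <= i <= k)%N -> #|Bs i.-1 :&: Bs i| = d.-1) /\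
  (forall j, j \in Bs 0%N -> dotp (a j) vp = 1) /\
  (forall j, j \in Bs k -> dotp (a j) vm = 1).

End Polytopes.

From mathcomp Require Import all_boot all_order all_algebra.
From mathcomp Require Import ring lra zify.
Import Order.TTheory GRing.Theory Num.Theory.
Set Implicit Arguments. Unset Strict Implicit. Unset Printing Implicit Defensive.
Local Open Scope ring_scope.

(* A feasible basis B, tight at a point w of P, yields the facet {y in P° : <w, y> = 1}
   of the polar, which contains the rows a_j (j in B); on it c varies by at most gam.
   Bases at most d - 1 steps apart along the path share a row, so the path links
   c/<c,v+> (on the facet of v+) to c/<c,v-> (on the facet of v-) through at most
   k/(d-1) + 2 facets.  As 0 is interior and P lies in the R-ball, these endpoints have
   c-values 1/<c,v+> >= 1/R and 1/<c,v-> <= -1/R, whence 2/R <= gam (k/(d-1) + 2). *)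

Section InnerProduct.
Variables (R : rcfType) (d : nat).
Implicit Types u v x y z : 'rV[R]_d.

Lemma dotpC x y : dotp x y = dotp y x.
Proof. by apply: eq_bigr => i _; rewrite mulrC. Qed.

Lemma dotpDr x y z : dotp x (y + z) = dotp x y + dotp x z.
Proof. by rewrite /dotp -big_split; apply: eq_bigr => i _; rewrite mxE mulrDr. Qed.

Lemma dotpZr x (s : R) y : dotp x (s *: y) = s * dotp x y.
Proof. by rewrite /dotp mulr_sumr; apply: eq_bigr => i _; rewrite mxE mulrCA. Qed.

Lemma dotpNr x y : dotp x (- y) = - dotp x y.
Proof. by rewrite -scaleN1r dotpZr mulN1r. Qed.

Lemma dotpBr x y z : dotp x (y - z) = dotp x y - dotp x z.
Proof. by rewrite dotpDr dotpNr. Qed.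

Lemma dotp0l y : dotp 0 y = 0.
Proof. by rewrite /dotp big1 // => i _; rewrite mxE mul0r. Qed.

Lemma dotpZl x (s : R) y : dotp (s *: x) y = s * dotp x y.
Proof. by rewrite dotpC dotpZr dotpC. Qed.

Lemma dotpNl x y : dotp (- x) y = - dotp x y.
Proof. by rewrite dotpC dotpNr dotpC. Qed.

Lemma dotpBl x y z : dotp (x - y) z = dotp x z - dotp y z.
Proof. by rewrite dotpC dotpBr !(dotpC z). Qed.

Lemma dotp_ge0 x : 0 <= dotp x x.
Proof. by apply: sumr_ge0 => i _; rewrite -expr2 sqr_ge0. Qed.

Lemma dotp_eq0 x : dotp x x = 0 -> x = 0.
Proof.
move=> x0; apply/rowP => i; rewrite !mxE.
have /psumr_eq0P sq0 : \sum_(j < d) x ord0 j ^+ 2 = 0.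
  by rewrite -[RHS]x0; apply: eq_bigr => j _; rewrite expr2.
by apply/eqP; rewrite -sqrf_eq0 sq0 // => j _; exact: sqr_ge0.
Qed.

Lemma enormN x : enorm (- x) = enorm x.
Proof. by rewrite /enorm dotpNl dotpNr opprK. Qed.

Lemma dotp_le_enorm x y : dotp x y <= enorm x * enorm y.
Proof.
have [x0|xn0] := eqVneq x 0; first by rewrite x0 dotp0l /enorm dotp0l sqrtr0 mul0r.
have xx_gt0 : 0 < dotp x x.
  by rewrite lt_def dotp_ge0 andbT; exact: contra_neq (@dotp_eq0 x) xn0.
set p := dotp x x in xx_gt0 *; set r := dotp x y; set q := dotp y y.
have proj_ge0 := dotp_ge0 ((r / p) *: x - y).
have expand : dotp ((r / p) *: x - y) ((r / p) *: x - y) = q - r ^+ 2 / p.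
  have p_neq0 : p != 0 by rewrite gt_eqF.
  by rewrite !(dotpBr, dotpBl, dotpZr, dotpZl) (dotpC y x) -/p -/r -/q; field.
rewrite expand subr_ge0 ler_pdivrMr // mulrC in proj_ge0.
apply: le_trans (ler_norm r) _.
by rewrite -sqrtr_sqr -sqrtrM ?dotp_ge0 // ler_sqrt // mulr_ge0 // dotp_ge0.
Qed.

Lemma dotp_unit_le_enorm u x : enorm u = 1 -> dotp u x <= enorm x.
Proof. by move=> u1; have := dotp_le_enorm u x; rewrite u1 mul1r. Qed.

Lemma dotp_unit_self u : enorm u = 1 -> dotp u u = 1.
Proof. by move=> u1; rewrite -(sqr_sqrtr (dotp_ge0 u)) -/(enorm u) u1 expr1n. Qed.

Lemma dotp_normalize u v : dotp u v != 0 -> dotp v ((dotp u v)^-1 *: u) = 1.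
Proof. by move=> uv_neq0; rewrite dotpZr [dotp v u]dotpC mulVf. Qed.

End InnerProduct.

Section ChainOfSets.
Local Open Scope nat_scope.
Variables (T : finType) (Bs : nat -> {set T}) (d k : nat).
Hypothesis card_Bs : forall i, i <= k -> #|Bs i| = d.
Hypothesis card_consecutive : forall i, 0 < i <= k -> #|Bs i.-1 :&: Bs i| = d.-1.

Lemma card_chain_setD s t : s <= t <= k -> #|Bs s :\: Bs t| <= t - s.
Proof.
elim: t => [|t IH] /andP [st tk].
  by move: st; rewrite leqn0 => /eqP ->; rewrite setDv cards0.
have [st'|ts|->] := ltngtP s t.+1; [|lia|by rewrite setDv cards0].
have meet : #|Bs t :&: Bs t.+1| = d.-1 by apply: (card_consecutive (i := t.+1)); lia.
have step : #|Bs t :\: Bs t.+1| <= 1 by rewrite cardsD card_Bs ?meet; lia.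
have sub : Bs s :\: Bs t.+1 \subset (Bs s :\: Bs t) :|: (Bs t :\: Bs t.+1).
  apply/subsetP => x; rewrite !inE.
  by case: (x \in Bs s); case: (x \in Bs t); case: (x \in Bs t.+1).
have := leq_of_leqif (leq_card_setU (Bs s :\: Bs t) (Bs t :\: Bs t.+1)).
have := subset_leq_card sub; have := IH ltac:(lia); lia.
Qed.

Lemma chain_sets_meet s t : s <= t <= k -> t - s < d ->
  exists2 j, j \in Bs s & j \in Bs t.
Proof.
move=> stk gap; have := card_chain_setD stk; have := cardsID (Bs t) (Bs s).
rewrite card_Bs; last by lia.
move=> splitB setD_le; have /card_gt0P [j] : 0 < #|Bs s :&: Bs t| by lia.
by rewrite inE => /andP [js jt]; exists j.
Qed.

End ChainOfSets.

Section PolarFacets.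
Variables (R : rcfType) (d n : nat) (a : 'I_n -> 'rV[R]_d).

Lemma polar_row j : polar a (a j).
Proof. by move=> x Px; rewrite dotpC; exact: Px j. Qed.

Lemma tight_face_is_facet B w : (0 < d)%N -> feasible_basis a B -> inP a w ->
  (forall j, j \in B -> dotp (a j) w = 1) ->
  is_facet (polar a) (fun y => polar a y /\ dotp w y = 1).
Proof.
move=> d_gt0 [cardB [_ indepB]] Pw tightB.
have [j0 j0B] : exists j, j \in B by apply/card_gt0P; rewrite cardB.
exists w, 1; split.
  by apply: contra_eqN (tightB j0 j0B) => /eqP ->; rewrite dotpC dotp0l eq_sym oner_eq0.
split; first by move=> y Py; exact: Py w Pw.
split=> //.
(* Enumerated along 'I_d, the rows a_j (j in B) are even linearly independent. *)
pose f i : 'I_n := enum_val (cast_ord (esym cardB) i).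
have fB i : f i \in B by exact: enum_valP.
have f_inj : injective f by move=> i1 i2 /enum_val_inj /cast_ord_inj.
exists (fun i => a (f i)); split.
  by move=> i; split; [exact: polar_row | rewrite dotpC tightB].
move=> lam _ comb0 i.
pose mu j := \sum_(i | f i == j) lam i.
have comb_mu : \sum_(j in B) mu j *: a j = \sum_i lam i *: a (f i).
  rewrite [RHS](partition_big f (mem B)) //=.
  apply: eq_bigr => j _; rewrite scaler_suml.
  by apply: eq_big => [i'|i' /eqP ->].
have := indepB mu; rewrite comb_mu comb0 => /(_ erefl (f i) (fB i)).
by rewrite /mu (big_pred1 i) // => i'; rewrite (inj_eq f_inj).
Qed.

Lemma support_gt0 u v : (exists eps : R, 0 < eps /\ forall x, enorm x < eps -> inP a x) ->
  enorm u = 1 -> (forall x, inP a x -> dotp u x <= dotp u v) -> 0 < dotp u v.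
Proof.
move=> [eps [eps_gt0 ball_in]] u1 v_max.
have eps2_gt0 : 0 < eps / 2 by rewrite divr_gt0.
apply: lt_le_trans eps2_gt0 _.
have := v_max ((eps / 2) *: u); rewrite dotpZr dotp_unit_self // mulr1; apply.
apply: ball_in.
rewrite /enorm dotpZl dotpZr dotp_unit_self // mulr1 -expr2 sqrtr_sqr.
by rewrite gtr0_norm //; lra.
Qed.

Lemma polar_support_normal u v : 0 < dotp u v ->
  (forall x, inP a x -> dotp u x <= dotp u v) -> polar a ((dotp u v)^-1 *: u).
Proof.
by move=> uv_gt0 v_max x Px; rewrite dotpZr mulrC ler_pdivrMr // mul1r dotpC v_max.
Qed.

End PolarFacets.

Section SimplexPathSpread.
Variables (R : rcfType) (d n : nat) (a : 'I_n -> 'rV[R]_d) (gam : R) (c : 'rV[R]_d).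
Hypothesis d_ge2 : (2 <= d)%N.
Hypothesis facet_diam : forall F, is_facet (polar a) F -> diam_le F gam.
Hypothesis c_unit : enorm c = 1.

Lemma tight_face_spread B w y z : feasible_basis a B -> inP a w ->
  (forall j, j \in B -> dotp (a j) w = 1) ->
  polar a y -> polar a z -> dotp w y = 1 -> dotp w z = 1 ->
  dotp c y - dotp c z <= gam.
Proof.
move=> fB Pw tightB Py Pz wy wz; rewrite -dotpBr.
apply: le_trans (dotp_unit_le_enorm _ c_unit) _.
by apply: (facet_diam (tight_face_is_facet _ fB Pw tightB)) => //; lia.
Qed.

Lemma basis_rows_spread B j j' : feasible_basis a B -> j \in B -> j' \in B ->
  dotp c (a j) - dotp c (a j') <= gam.
Proof.
move=> fB jB j'B; have [_ [[v [[Pv _] tightB]] _]] := fB.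
by apply: (tight_face_spread fB Pv tightB (polar_row j) (polar_row j'));
  rewrite dotpC tightB.
Qed.

Variables (vp vm : 'rV[R]_d) (k : nat) (Bs : nat -> {set 'I_n}).
Hypotheses (P_vp : inP a vp) (P_vm : inP a vm) (path : simplex_path a vp vm k Bs).

Let card_Bs i : (i <= k)%N -> #|Bs i| = d.
Proof. by case: path => fBs _ /fBs []. Qed.

Let shared_row s t : (s <= t <= k)%N -> (t - s <= d.-1)%N ->
  exists2 j, j \in Bs s & j \in Bs t.
Proof.
case: path => _ [consec _] stk gap.
by apply: (chain_sets_meet card_Bs consec stk); lia.
Qed.

Lemma path_spread_from_start y : polar a y -> dotp vp y = 1 ->
  forall m i j, (i <= k)%N -> (i <= m * d.-1)%N -> j \in Bs i ->
  dotp c y - dotp c (a j) <= gam * m.+1%:R.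
Proof.
case: path => fBs [_ [tight0 _]] Py vpy; elim=> [|m IH] i j ik im ji.
  move: im; rewrite mul0n leqn0 => /eqP i0; subst i.
  rewrite mulr1.
  apply: (tight_face_spread (fBs 0%N ik) P_vp tight0 Py (polar_row j)) => //.
  by rewrite dotpC tight0.
have [j' j'_prev j'_i] := @shared_row (i - d.-1) i ltac:(lia) ltac:(lia).
have im' : (i - d.-1 <= m * d.-1)%N.
  by move: im; rewrite mulSn; move: (m * d.-1)%N => M; lia.
have := IH (i - d.-1)%N j' ltac:(lia) im' j'_prev.
have := basis_rows_spread (fBs i ik) j'_i ji.
rewrite -addn1 natrD mulrDr mulr1; lra.
Qed.

Lemma path_spread y z : polar a y -> dotp vp y = 1 -> polar a z -> dotp vm z = 1 ->
  exists2 m, (m * d.-1 <= k)%N & dotp c y - dotp c z <= gam * m.+2%:R.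
Proof.
move=> Py vpy Pz vmz; case: path => fBs [_ [_ tightk]].
have D_gt0 : (0 < d.-1)%N by lia.
pose m := (k.-1 %/ d.-1)%N.
exists m; first by apply: leq_trans (leq_divM _ _) (leq_pred k).
have [j' j'_prev j'_k] := @shared_row (k - d.-1) k ltac:(lia) ltac:(lia).
have km : (k - d.-1 <= m * d.-1)%N.
  have := divn_eq k.-1 d.-1; have := ltn_pmod k.-1 D_gt0; rewrite -/m.
  by move: (m * d.-1)%N (k.-1 %% d.-1)%N => M r; lia.
have := path_spread_from_start Py vpy (leq_subr _ _) km j'_prev.
have last_facet : dotp c (a j') - dotp c z <= gam.
  apply: (tight_face_spread (fBs k (leqnn k)) P_vm tightk (polar_row j') Pz) => //.
  by rewrite dotpC tightk.
rewrite -addn1 natrD mulrDr mulr1; lra.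
Qed.

End SimplexPathSpread.

Theorem lemma5p4 (R : rcfType) (d n : nat) (a : 'I_n -> 'rV[R]_d) (Rad gam : R) :
  (2 <= d)%N -> 0 < Rad -> 0 < gam ->
  minimal_desc a ->
  simple_poly a ->
  (forall x, inP a x -> enorm x <= Rad) ->
  (exists eps : R, 0 < eps /\ forall x, enorm x < eps -> inP a x) ->
  (forall F, is_facet (polar a) F -> diam_le F gam) ->
  forall (c vp vm : 'rV[R]_d),
    enorm c = 1 ->
    is_vertex a vp -> (forall x, inP a x -> dotp c x <= dotp c vp) ->
    is_vertex a vm -> (forall x, inP a x -> dotp c vm <= dotp c x) ->
    forall (k : nat) (Bs : nat -> {set 'I_n}),
      simplex_path a vp vm k Bs ->
      (d.-1)%:R * (2 / (Rad * gam) - 2) <= k%:R.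
Proof.
(* Minimality and simplicity of the description are not needed for the bound. *)
move=> d2 Rad_gt0 gam_gt0 _ _ bounded interior facet_diam c vp vm c1 [P_vp _] vp_max
  [P_vm _] vm_min k Bs path.
have c1N : enorm (- c) = 1 by rewrite enormN.
have vm_max x : inP a x -> dotp (- c) x <= dotp (- c) vm.
  by rewrite !dotpNl lerN2; exact: vm_min.
have p_gt0 := support_gt0 interior c1 vp_max.
have q_gt0 := support_gt0 interior c1N vm_max.
set p := dotp c vp in p_gt0 vp_max *; set q := dotp (- c) vm in q_gt0 vm_max *.
have p_le : p <= Rad := le_trans (dotp_unit_le_enorm _ c1) (bounded _ P_vp).
have q_le : q <= Rad := le_trans (dotp_unit_le_enorm _ c1N) (bounded _ P_vm).
have [m mk spread] := path_spread d2 facet_diam c1 P_vp P_vm path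
  (polar_support_normal p_gt0 vp_max) (dotp_normalize (lt0r_neq0 p_gt0))
  (polar_support_normal q_gt0 vm_max) (dotp_normalize (lt0r_neq0 q_gt0)).
rewrite !dotpZr dotpNr dotp_unit_self // -/p -/q mulr1 mulrN1 opprK in spread.
have p_inv : Rad^-1 <= p^-1 by rewrite lef_pV2 ?posrE.
have q_inv : Rad^-1 <= q^-1 by rewrite lef_pV2 ?posrE.
have drop_bound : 2 / Rad <= gam * m.+2%:R by lra.
have m_bound : 2 / (Rad * gam) - 2 <= m%:R.
  rewrite invfM mulrA lerBlDr ler_pdivrMr // [X in _ <= X]mulrC.
  by rewrite -natrD addn2.
apply: le_trans (ler_wpM2l (ler0n _ _) m_bound) _.
by rewrite -natrM ler_nat mulnC.
Qed.
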